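(* Let $\alpha,\beta,p\in\mathbb{C}$ be constants and let $h,g:\mathbb{Z}^2\to\mathbb{C}$ satisfy $\widehat{h}-\widetilde{h}=\widetilde{\widetilde{g}}-g$ and $(h+\widetilde g)g=\beta^2-\alpha^2$. Let $\varphi$ solve the Lax pair $$\widetilde{\widetilde{\varphi}}+h\,\widetilde{\varphi}+\alpha^2\varphi=p^2\varphi,\qquad \widehat{\varphi}=\widetilde{\varphi}-g\,\varphi,$$ and let $\varphi^*$ solve the adjoint Lax pair $$\widetilde{\widetilde{\varphi^*}}-h\,\widetilde{\varphi^*}+\alpha^2\varphi^*=p^2\varphi^*,\qquad \widehat{\varphi^*}=\widetilde{\varphi^*}+g\,\varphi^* .$$ Then there is a constant $\rho$ such that for all $n,m\in\mathbb{Z}$ $$\varphi\,\widetilde{\varphi^*}+\varphi^*\widetilde{\varphi}=\varphi\,\widehat{\varphi^*}+\varphi^*\widehat{\varphi}=(-1)^{n+m}\rho\,s^{2n}t^{2m},$$ where $s^2=\alpha^2-p^2$, $t^2=\beta^2-p^2$. If $\varphi^*$ is proportional to $(-1)^{n+m}\varphi$, then $\rho=0$.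
   Context: Shift notation: for a function $f$ on $\mathbb{Z}^2$ (variables $n,m$), $\widetilde f(n,m)=f(n+1,m)$, $\widehat f(n,m)=f(n,m+1)$, and combined accents denote composed shifts. *)

(* The complex field is represented by an arbitrary
   numClosedFieldType C (which includes algC and MathComp-Analysis's complexes). *)
From HB Require Import structures.
From mathcomp Require Export all_boot all_order all_algebra.
Set Implicit Arguments.
Unset Strict Implicit.
Unset Printing Implicit Defensive.
Export Order.TTheory GRing.Theory Num.Theory.

From mathcomp Require Import ring.

Set Implicit Arguments.
Unset Strict Implicit.
Local Open Scope ring_scope.

(* The pairing W = phi phi*~ + phi* phi~ of the Lax pair with its adjoint obeys
   first-order recurrences in both directions: eliminating the double shifts with
   the two spectral equations gives W~ = -s^2 W, and the second halves of the Lax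
   pairs, together with (h + g~) g = beta^2 - alpha^2, give W^ = -t^2 W and show
   that phi phi*^ + phi* phi^ is W again.  Solving the recurrences on Z yields
   W = (-1)^(n+m) rho s^(2n) t^(2m) with rho = W(0,0).  If phi* = c (-1)^(n+m) phi,
   the two terms of W cancel. *)

Lemma int_geometric (F : fieldType) (f : int -> F) (a : F) :
  (forall n, f (n + 1) = a * f n) -> forall n, f n = a ^ n * f 0.
Proof.
have [-> f_step n|a_neq0 f_step] := eqVneq a 0.
  (* In MathComp 0 ^ n = 0 for every nonzero n : int, negative ones included. *)
  rewrite exp0rz; have [->|n_neq0] := eqVneq n 0; first by rewrite mul1r.
  by rewrite -(subrK 1 n) f_step !mul0r.
have step_iff n : f n = a ^ n * f 0 <-> f (n + 1) = a ^ (n + 1) * f 0.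
  rewrite f_step expfzDr // expr1z (mulrC _ a) -mulrA.
  by split=> [-> // |]; apply: (mulfI a_neq0).
elim/int_rec=> [|k IHk|k IHk]; first by rewrite expr0z mul1r.
  by move/step_iff: IHk; rewrite -addn1 PoszD.
by apply/step_iff; rewrite -addn1 PoszD opprD addrNK.
Qed.

Lemma int2_geometric (F : fieldType) (f : int -> int -> F) (a b : F) :
  (forall n m, f (n + 1) m = a * f n m) -> (forall n m, f n (m + 1) = b * f n m) ->
  forall n m, f n m = a ^ n * b ^ m * f 0 0.
Proof.
move=> fSn fSm n m.
by rewrite (int_geometric (fSn^~ m)) (int_geometric (fSm 0)) mulrA.
Qed.

Section AdjointPairing.

Variables (C : fieldType) (alpha beta p : C) (h g phi phis : int -> int -> C).

Hypothesis Hgg : forall n m, (h n m + g (n + 1) m) * g n m = beta ^+ 2 - alpha ^+ 2.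
Hypothesis Lax1 : forall n m,
  phi (n + 2) m + h n m * phi (n + 1) m + alpha ^+ 2 * phi n m = p ^+ 2 * phi n m.
Hypothesis Lax2 : forall n m, phi n (m + 1) = phi (n + 1) m - g n m * phi n m.
Hypothesis Adj1 : forall n m,
  phis (n + 2) m - h n m * phis (n + 1) m + alpha ^+ 2 * phis n m = p ^+ 2 * phis n m.
Hypothesis Adj2 : forall n m, phis n (m + 1) = phis (n + 1) m + g n m * phis n m.

Definition pairing n m := phi n m * phis (n + 1) m + phis n m * phi (n + 1) m.

Lemma pairing_vertical n m :
  phi n m * phis n (m + 1) + phis n m * phi n (m + 1) = pairing n m.
Proof. by rewrite /pairing Lax2 Adj2; ring. Qed.

Lemma phiSS n m :
  phi (n + 1 + 1) m = p ^+ 2 * phi n m - h n m * phi (n + 1) m - alpha ^+ 2 * phi n m.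
Proof. by rewrite -addrA -(Lax1 n m); ring. Qed.

Lemma phisSS n m :
  phis (n + 1 + 1) m = p ^+ 2 * phis n m + h n m * phis (n + 1) m - alpha ^+ 2 * phis n m.
Proof. by rewrite -addrA -(Adj1 n m); ring. Qed.

Lemma pairingSn n m : pairing (n + 1) m = - (alpha ^+ 2 - p ^+ 2) * pairing n m.
Proof. by rewrite /pairing phiSS phisSS; ring. Qed.

Lemma pairingSm n m : pairing n (m + 1) = - (beta ^+ 2 - p ^+ 2) * pairing n m.
Proof.
rewrite /pairing !Lax2 !Adj2 phiSS phisSS.
have -> : beta ^+ 2 = (h n m + g (n + 1) m) * g n m + alpha ^+ 2 by rewrite Hgg subrK.
ring.
Qed.

Lemma pairing_closed_form n m :
  pairing n m = (-1) ^ (n + m) * pairing 0 0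
                * (alpha ^+ 2 - p ^+ 2) ^ n * (beta ^+ 2 - p ^+ 2) ^ m.
Proof.
rewrite (int2_geometric pairingSn pairingSm).
rewrite -[- (alpha ^+ 2 - _)]mulN1r -[- (beta ^+ 2 - _)]mulN1r.
by rewrite !expfzMl expfzDr ?oppr_eq0 ?oner_eq0 //; ring.
Qed.

Lemma pairing_alternating_eq0 c :
  (forall n m, phis n m = c * ((-1) ^ (n + m) * phi n m)) -> forall n m, pairing n m = 0.
Proof.
move=> phisE n m; rewrite /pairing !phisE addrAC.
by rewrite (@expfzDr _ (-1) (n + m) 1) ?oppr_eq0 ?oner_eq0 // expr1z; ring.
Qed.

End AdjointPairing.

Theorem lemma3p1 (C : numClosedFieldType) (alpha beta p : C)
  (h g phi phis : int -> int -> C)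
  (Hhg : forall n m : int, h n (m + 1) - h (n + 1) m = g (n + 2) m - g n m)
  (Hgg : forall n m : int, (h n m + g (n + 1) m) * g n m = beta ^+ 2 - alpha ^+ 2)
  (Lax1 : forall n m : int,
     phi (n + 2) m + h n m * phi (n + 1) m + alpha ^+ 2 * phi n m = p ^+ 2 * phi n m)
  (Lax2 : forall n m : int, phi n (m + 1) = phi (n + 1) m - g n m * phi n m)
  (Adj1 : forall n m : int,
     phis (n + 2) m - h n m * phis (n + 1) m + alpha ^+ 2 * phis n m = p ^+ 2 * phis n m)
  (Adj2 : forall n m : int, phis n (m + 1) = phis (n + 1) m + g n m * phis n m) :
  exists rho : C,
    (forall n m : int,
       phi n m * phis (n + 1) m + phis n m * phi (n + 1) m
         = phi n m * phis n (m + 1) + phis n m * phi n (m + 1)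
       /\ phi n m * phis n (m + 1) + phis n m * phi n (m + 1)
         = (-1) ^ (n + m) * rho * (alpha ^+ 2 - p ^+ 2) ^ n * (beta ^+ 2 - p ^+ 2) ^ m)
    /\ ((exists c : C, forall n m : int, phis n m = c * ((-1) ^ (n + m) * phi n m)) ->
        rho = 0).
Proof.
exists (pairing phi phis 0 0); split.
  move=> n m; rewrite (pairing_vertical Lax2 Adj2).
  by split=> //; apply: (pairing_closed_form Hgg Lax1 Lax2 Adj1 Adj2).
by case=> c phisE; apply: pairing_alternating_eq0 phisE 0 0.
Qed.
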